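(* Let $(X,d)$ be a uniformly locally finite extended metric space that is not amenable. Then for all $n\in\mathbb N$ and $R>0$ there exists $S>0$ such that for every finite set $M\subseteq X$ there are points $x_1,\dots,x_{n|M|}$ such that the closed balls $\bar B(x_i,R)$, $i=1,\dots,n|M|$, are pairwise disjoint and all contained in $\bar B(M,S)$.
   Context: An extended metric may take value $\infty$; $\bar B(A,R)=\{x:d(x,A)\le R\}$. Uniformly locally finite: $\sup_{x}|\bar B(x,R)|<\infty$ for all $R>0$. $\partial_RA=\{x\in X:d(x,A)\le R\text{ and }d(x,X\setminus A)\le R\}$. $(X,d)$ is amenable if for every $R,\varepsilon>0$ there is a finite nonempty $F\subseteq X$ with $|\partial_RF|\le\varepsilon|F|$. *)

From HB Require Import structures.
From mathcomp Require Import all_boot all_order all_algebra.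
From mathcomp Require Import finmap.
From mathcomp Require Import all_classical all_reals ereal.
Set Implicit Arguments. Unset Strict Implicit. Unset Printing Implicit Defensive.
Import Order.TTheory GRing.Theory Num.Theory.
Local Open Scope classical_set_scope.
Local Open Scope ring_scope.
Local Open Scope ereal_scope.

Section ExtMetric.
Context {R : realType} {X : choiceType}.

Definition ext_metric (d : X -> X -> \bar R) : Prop :=
  [/\ forall x y, d x y \is a fin_num \/ d x y = +oo,
      forall x y, 0 <= d x y,
      forall x y, d x y = 0 <-> x = y,
      forall x y, d x y = d y x &
      forall x y z, d x z <= d x y + d y z].

(* d(x, A) = inf_{a in A} d(x, a)  (= +oo when A is empty) *)
Definition dist_set (d : X -> X -> \bar R) (x : X) (A : set X) : \bar R :=
  ereal_inf [set d x a | a in A].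

Definition cball_set (d : X -> X -> \bar R) (A : set X) (r : R) : set X :=
  [set x | dist_set d x A <= r%:E].

Definition cball (d : X -> X -> \bar R) (x : X) (r : R) : set X :=
  cball_set d [set x] r.

Definition unif_loc_finite (d : X -> X -> \bar R) : Prop :=
  forall r : R, (0 < r)%R -> exists N : nat,
    forall x, finite_set (cball d x r) /\ (#|` fset_set (cball d x r)| <= N)%N.

Definition bdry (d : X -> X -> \bar R) (r : R) (A : set X) : set X :=
  [set x | dist_set d x A <= r%:E /\ dist_set d x (~` A) <= r%:E].

Definition amenable (d : X -> X -> \bar R) : Prop :=
  forall r eps : R, (0 < r)%R -> (0 < eps)%R ->
    exists F : {fset X}, F != fset0 /\
      finite_set (bdry d r [set` F]) /\
      ((#|` fset_set (bdry d r [set` F])|%:R : R) <= eps * (#|` F|%:R))%R.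

End ExtMetric.

From HB Require Import structures.
From mathcomp Require Import all_boot all_order all_algebra.
From mathcomp Require Import finmap.
From mathcomp Require Import all_classical all_reals ereal.
From mathcomp Require Import lra.
Import Order.TTheory GRing.Theory Num.Theory.
Local Open Scope classical_set_scope.
Local Open Scope ring_scope.

(* Non-amenability gives r0, eps > 0 with |boundary_{r0} F| > eps |F| for every
   nonempty finite F.  Covering that boundary by balls of radius r0 + 1 centred
   in the shell B(F, r0 + 1) \ F, whose cardinalities are bounded by some N
   (uniform local finiteness), shows that passing from F to B(F, r0 + 1)
   multiplies the size by at least 1 + c with c = eps / (N + 1).  Iterating k
   times, B(M, k (r0 + 2)) has at least (1 + k c) |M| points, so for every K
   some radius S satisfies |B(M, S)| >= K |M| for all finite M.

   On the other hand a maximal 2r-separated subset Y of a finite set A gives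
   pairwise disjoint r-balls, and since the 2r-balls around Y cover A,
   |A| <= |Y| N' where N' bounds the size of 2r-balls.  Taking K = n N' and
   A = B(M, S) yields n |M| disjoint r-balls centred in B(M, S), hence
   contained in B(M, S + r + 1). *)

Section ExtendedMetricSpace.
Context {R : realType} {X : choiceType} (d : X -> X -> \bar R).
Hypothesis hd : ext_metric d.

Lemma ed_sym x y : d x y = d y x.
Proof. by case: hd. Qed.

Lemma ed_triangle x y z : (d x z <= d x y + d y z)%E.
Proof. by case: hd. Qed.

Lemma ed_refl x : d x x = 0%E.
Proof. by case: hd => _ _ h _ _; apply/h. Qed.

Lemma dist_set1 y x : dist_set d y [set x] = d y x.
Proof. by rewrite /dist_set image_set1 ereal_inf1. Qed.

Lemma cballE y rho z : cball d y rho z = (d z y <= rho%:E)%E.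
Proof. by rewrite /cball /cball_set /= dist_set1. Qed.

Lemma dist_set_le y {A : set X} {a} : A a -> (dist_set d y A <= d y a)%E.
Proof. by move=> Aa; apply: ge_ereal_inf; exists (d y a) => //; exists a. Qed.

Lemma dist_set_lt {y} {A : set X} {s e : R} : (dist_set d y A <= s%:E)%E -> 0 < e ->
  exists2 a, A a & (d y a < (s + e)%:E)%E.
Proof.
move=> hs he; have : (dist_set d y A < (s + e)%:E)%E.
  by apply: le_lt_trans hs _; rewrite lte_fin ltrDl.
by move/ereal_inf_lt => [_ [a Aa <-] h]; exists a.
Qed.

Lemma mem_cball_set (A : set X) (s : R) a : 0 <= s -> A a -> cball_set d A s a.
Proof.
move=> s0 Aa; rewrite /cball_set /=; apply: le_trans (dist_set_le a Aa) _.
by rewrite ed_refl lee_fin.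
Qed.

(* Triangle inequality for neighbourhoods, with a unit of slack absorbing the
   two infima involved. *)
Lemma cball_set_trans {A B : set X} {s t : R} :
  B `<=` cball_set d A s -> cball_set d B t `<=` cball_set d A (s + t + 1).
Proof.
move=> BA z hz; have h2 : 0 < 2^-1 :> R by rewrite invr_gt0.
have [b Bb hzb] := dist_set_lt hz h2.
have [a Aa hba] := dist_set_lt (BA b Bb) h2.
rewrite /cball_set /=; apply: le_trans (dist_set_le z Aa) _.
apply: le_trans (ed_triangle z b a) _.
have -> : s + t + 1 = (t + 2^-1) + (s + 2^-1) by lra.
by rewrite EFinD; apply: leeD; apply: ltW.
Qed.

Lemma disjoint_cball (r : R) a y : ((r + r)%:E < d y a)%E ->
  cball d a r `&` cball d y r = set0.
Proof.
move=> far; rewrite -subset0 => z []; rewrite !cballE => hza hzy.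
have : (d y a <= (r + r)%:E)%E.
  by apply: le_trans (ed_triangle y z a) _; rewrite ed_sym EFinD; apply: leeD.
by rewrite leNgt far.
Qed.

Definition cball_card_le (rho : R) (N : nat) : Prop :=
  forall x, finite_set (cball d x rho) /\ (#|` fset_set (cball d x rho)| <= N)%N.

Lemma cball_card_leW {rho N N'} : (N <= N')%N ->
  cball_card_le rho N -> cball_card_le rho N'.
Proof.
by move=> NN' hN x; have [finB cardB] := hN x; split => //; apply: leq_trans NN'.
Qed.

Lemma card_split (A : {fset X}) (P : pred X) :
  (#|`A| <= #|`[fset z in A | P z]%fset| + #|`[fset z in A | ~~ P z]%fset|)%N.
Proof.
have {1}-> : A = ([fset z in A | P z] `|` [fset z in A | ~~ P z])%fset.
  by apply/fsetP => z; rewrite !inE; case: (z \in A); case: (P z).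
by rewrite cardfsU leq_subr.
Qed.

Lemma card_le_cover (rho : R) (N : nat) (Y : seq X) (A : {fset X}) :
  cball_card_le rho N ->
  (forall z, z \in A -> exists2 y, y \in Y & cball d y rho z) ->
  (#|`A| <= size Y * N)%N.
Proof.
move=> hN; elim: Y A => [|y Y IH] A covA /=.
  suff -> : A = fset0 by rewrite cardfs0.
  by apply/fsetP => z; rewrite inE; apply/negbTE/negP => /covA [y].
have [finB cardB] := hN y.
apply: leq_trans (card_split A (mem (fset_set (cball d y rho)))) _.
rewrite mulSn leq_add //.
  apply: leq_trans cardB; apply: fsubset_leq_card.
  by apply/fsubsetP => z; rewrite !inE => /andP[].
apply: IH => z; rewrite !inE => /andP[zA zNB].
have [y' + hy'] := covA z zA; rewrite inE => /orP[/eqP ey|]; last by exists y'.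
by move: zNB; rewrite in_fset_set // -ey mem_set.
Qed.

Lemma separated_net {rho : R} (A : {fset X}) : 0 <= rho ->
  exists Y : seq X, [/\ uniq Y, {subset Y <= A},
    {in Y &, forall y1 y2, y1 != y2 -> (rho%:E < d y1 y2)%E} &
    forall z, z \in A -> exists2 y, y \in Y & cball d y rho z].
Proof.
move=> rho0; have [m] := ubnP #|`A|; elim: m A => // m IH A ltAm.
have [->|[a aA]] := fset_0Vmem A; first by exists [::]; split => // z; rewrite inE.
pose A' := [fset z in A | (rho%:E < d z a)%E]%fset.
have sA'A : (A' `<=` A `\ a)%fset.
  apply/fsubsetP => z; rewrite !inE => /andP[zA far]; rewrite zA andbT.
  by apply: contraTneq far => ->; rewrite ed_refl lte_fin -leNgt.
have ltA'm : (#|`A'| < m)%N.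
  rewrite ltnS in ltAm; apply: leq_trans ltAm.
  exact: leq_ltn_trans (fsubset_leq_card sA'A) (fproper_ltn_card (fproperD1 aA)).
have [Y' [uY' sY'A' sepY' covY']] := IH A' ltA'm.
have farY' y : y \in Y' -> (rho%:E < d y a)%E by move/sY'A'; rewrite !inE => /andP[].
exists (a :: Y'); split.
- by rewrite /= uY' andbT; apply/negP => /farY'; rewrite ed_refl lte_fin ltNge rho0.
- by move=> y; rewrite inE => /orP[/eqP->//|/sY'A']; rewrite !inE => /andP[].
- move=> y1 y2; rewrite !inE => /orP[/eqP->|y1Y'] /orP[/eqP->|y2Y'].
  + by rewrite eqxx.
  + by move=> _; rewrite ed_sym; apply: farY'.
  + by move=> _; apply: farY'.
  + exact: sepY'.
- move=> z zA; have [far|near] := boolP (rho%:E < d z a)%E.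
  + have zA' : z \in A' by rewrite !inE zA far.
    have [y yY' hy] := covY' z zA'.
    by exists y => //; rewrite inE yY' orbT.
  + by exists a; [rewrite mem_head | rewrite cballE leNgt].
Qed.

Lemma disjoint_cball_packing {r : R} {N : nat} (A : {fset X}) : 0 < r ->
  cball_card_le (r + r) N -> exists Y : seq X, [/\ uniq Y, {subset Y <= A},
    {in Y &, forall y1 y2, y1 != y2 -> cball d y1 r `&` cball d y2 r = set0} &
    (#|`A| <= size Y * N)%N].
Proof.
move=> r_gt0 hN; have rr_ge0 : 0 <= r + r by rewrite addr_ge0 // ltW.
have [Y [uY sYA sepY covY]] := separated_net A rr_ge0.
exists Y; split => //; last exact: card_le_cover hN covY.
by move=> y1 y2 y1Y y2Y ne; apply: disjoint_cball; rewrite ed_sym; apply: sepY.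
Qed.

Hypothesis hulf : unif_loc_finite d.

(* Neighbourhoods of finite sets are finite: they are covered by finitely many
   balls, each finite by uniform local finiteness. *)
Lemma finite_cball_set (F : {fset X}) {s : R} : 0 <= s ->
  finite_set (cball_set d [set` F] s).
Proof.
move=> s0; have [N hN] := hulf (s + 1) (ltr_pwDr ltr01 s0).
apply: (@sub_finite_set _ _ (\bigcup_(a in [set` F]) cball d a (s + 1))).
  move=> z hz; have [a Fa hza] := dist_set_lt hz ltr01.
  by exists a => //; rewrite cballE ltW.
by apply: bigcup_finite => [|a _]; [exact: finite_fset | case: (hN a)].
Qed.

Definition nbhd_fset (s : R) (G : {fset X}) : {fset X} :=
  fset_set (cball_set d [set` G] s).

Lemma in_nbhd_fset (s : R) (G : {fset X}) z : 0 <= s ->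
  (z \in nbhd_fset s G) = (z \in cball_set d [set` G] s).
Proof. by move=> s0; rewrite /nbhd_fset in_fset_set //; apply: finite_cball_set. Qed.

Lemma fsub_nbhd_fset (s : R) (G : {fset X}) : 0 <= s -> (G `<=` nbhd_fset s G)%fset.
Proof.
move=> s0; apply/fsubsetP => z zG.
by rewrite in_nbhd_fset // in_setE; apply: mem_cball_set.
Qed.

Lemma not_amenable_expansion : ~ amenable d -> exists r0 eps : R,
  [/\ 0 < r0, 0 < eps & forall F : {fset X}, F != fset0 ->
    finite_set (bdry d r0 [set` F]) ->
    eps * #|`F|%:R < #|` fset_set (bdry d r0 [set` F])|%:R].
Proof.
move=> hna; apply: contrapT => hexp; apply: hna => r0 eps hr0 heps.
apply: contrapT => hno; apply: hexp; exists r0, eps; split => // F F0 finF.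
by rewrite ltNge; apply/negP => small; apply: hno; exists F.
Qed.

Section Expansion.
Variables (r0 eps : R) (N : nat).
Hypotheses (hr0 : 0 < r0) (heps : 0 < eps) (hN : cball_card_le (r0 + 1) N).
Hypothesis hexp : forall F : {fset X}, F != fset0 ->
  finite_set (bdry d r0 [set` F]) ->
  eps * #|`F|%:R < #|` fset_set (bdry d r0 [set` F])|%:R.

Let r1_ge0 : 0 <= r0 + 1. Proof. by rewrite addr_ge0 // ltW. Qed.

(* The expansion rate of one neighbourhood step. *)
Let c := eps / N.+1%:R.

Let c_ge0 : 0 <= c. Proof. by rewrite divr_ge0 // ltW. Qed.

(* The boundary of a finite set lies in its r0-neighbourhood, hence is finite. *)
Lemma finite_bdry (F : {fset X}) : finite_set (bdry d r0 [set` F]).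
Proof. by apply: sub_finite_set (finite_cball_set F (ltW hr0)) => z []. Qed.

(* Each boundary point lies within r0 + 1 of the shell B(F, r0 + 1) \ F. *)
Lemma card_bdry_le (F : {fset X}) :
  (#|` fset_set (bdry d r0 [set` F])| <= #|` (nbhd_fset (r0 + 1) F `\` F)%fset| * N)%N.
Proof.
apply: (@card_le_cover _ _ (nbhd_fset (r0 + 1) F `\` F)%fset _ hN) => z.
rewrite in_fset_set ?in_setE; last exact: finite_bdry.
move=> [nearF nearCF]; have [zF|zNF] := boolP (z \in F).
- have [y yNF hzy] := dist_set_lt nearCF ltr01.
  exists y; last by rewrite cballE ltW.
  rewrite !inE; apply/andP; split; first exact/negP.
  rewrite in_nbhd_fset // in_setE.
  by apply: le_trans (dist_set_le y zF) _; rewrite ed_sym ltW.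
- exists z; last by rewrite cballE ed_refl lee_fin.
  rewrite !inE zNF /= in_nbhd_fset // in_setE; apply: le_trans nearF _.
  by rewrite lee_fin lerDl.
Qed.

(* One expansion step: |B(F, r0 + 1)| >= (1 + c) |F|, since the shell has more
   than c |F| points by the isoperimetric inequality and card_bdry_le. *)
Lemma nbhd_expansion (F : {fset X}) : F != fset0 ->
  (1 + c) * #|`F|%:R <= #|` nbhd_fset (r0 + 1) F|%:R.
Proof.
move=> F0; set D := (nbhd_fset (r0 + 1) F `\` F)%fset.
have cardB : #|` nbhd_fset (r0 + 1) F| = (#|`F| + #|`D|)%N.
  by rewrite cardfsDS ?fsub_nbhd_fset // subnKC // fsubset_leq_card ?fsub_nbhd_fset.
have bdry_big := hexp F F0 (finite_bdry F).
have bdry_small : #|` fset_set (bdry d r0 [set` F])|%:R <= #|`D|%:R * N.+1%:R :> R.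
  by rewrite -natrM ler_nat (leq_trans (card_bdry_le F)) // leq_mul.
have cN : c * N.+1%:R = eps by rewrite /c mulfVK.
have : c * #|`F|%:R < #|`D|%:R.
  rewrite -(ltr_pM2r (ltr0Sn _ N)) mulrAC cN; exact: lt_le_trans bdry_big bdry_small.
by rewrite cardB natrD; lra.
Qed.

Lemma sub_iter_nbhd k (F : {fset X}) : (F `<=` iter k (nbhd_fset (r0 + 1)) F)%fset.
Proof.
elim: k => [|k IH] /=; first exact: fsubset_refl.
exact: fsubset_trans IH (fsub_nbhd_fset _ _ r1_ge0).
Qed.

Lemma iter_nbhd_radius k (F : {fset X}) :
  [set` iter k (nbhd_fset (r0 + 1)) F] `<=` cball_set d [set` F] (k%:R * (r0 + 2)).
Proof.
elim: k => [|k IH] z /=; first by rewrite mul0r; apply: mem_cball_set.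
rewrite in_nbhd_fset // in_setE => /(cball_set_trans IH).
suff -> : k%:R * (r0 + 2) + (r0 + 1) + 1 = k.+1%:R * (r0 + 2) by [].
by rewrite -addn1 natrD; lra.
Qed.

Lemma iter_nbhd_card k (F : {fset X}) : F != fset0 ->
  (1 + k%:R * c) * #|`F|%:R <= #|` iter k (nbhd_fset (r0 + 1)) F|%:R.
Proof.
move=> F0; elim: k => [|k IH]; first by rewrite mul0r addr0 mul1r.
have G0 : iter k (nbhd_fset (r0 + 1)) F != fset0.
  by apply: contra F0 => /eqP G0; rewrite -fsubset0 -G0 sub_iter_nbhd.
have c1_ge0 : 0 <= 1 + c by rewrite addr_ge0.
rewrite iterS; apply: le_trans _ (nbhd_expansion _ G0).
apply: le_trans _ (ler_wpM2l c1_ge0 IH); rewrite -addn1 natrD.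
have := mulr_ge0 (mulr_ge0 (ler0n R k) (mulr_ge0 c_ge0 c_ge0)) (ler0n R #|`F|).
nra.
Qed.

End Expansion.

Lemma neighbourhood_growth (hna : ~ amenable d) (K : nat) : exists S : R,
  0 <= S /\ forall M : {fset X}, (K * #|`M| <= #|` nbhd_fset S M|)%N.
Proof.
have [r0 [eps [hr0 heps hexp]]] := not_amenable_expansion hna.
have [N hN] := hulf (r0 + 1) (addr_gt0 hr0 ltr01).
pose c := eps / N.+1%:R; have c_gt0 : 0 < c by rewrite divr_gt0.
pose k := (Num.truncn (K%:R / c)).+1.
have Kk : K%:R <= 1 + k%:R * c.
  suff Kk : K%:R < k%:R * c by lra.
  by rewrite -ltr_pdivrMr // truncnS_gt.
exists (k%:R * (r0 + 2)); split; first by rewrite mulr_ge0 // addr_ge0 // ltW.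
move=> M; have [->|M0] := eqVneq M fset0; first by rewrite cardfs0 muln0.
have KM : K%:R * #|`M|%:R <= (1 + k%:R * c) * #|`M|%:R by apply: ler_wpM2r.
rewrite -(ler_nat R) natrM; apply: le_trans KM _.
apply: le_trans (iter_nbhd_card _ _ _ hr0 heps hN hexp k M M0) _.
rewrite ler_nat; apply: fsubset_leq_card; apply/fsubsetP => z zG.
by rewrite in_nbhd_fset ?in_setE ?mulr_ge0 ?addr_ge0 ?ltW //; apply: iter_nbhd_radius.
Qed.

End ExtendedMetricSpace.

Lemma uniq_prefix_enum {T : eqType} {Y : seq T} {m : nat} :
  uniq Y -> (m <= size Y)%N -> exists f : 'I_m -> T, injective f /\ forall i, f i \in Y.
Proof.
move=> uY le_mY; have /tuple_uniqP injY : uniq (in_tuple Y) := uY.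
exists (fun i => tnth (in_tuple Y) (widen_ord le_mY i)).
split => [i j /injY /(congr1 val) /= /val_inj //|i]; exact: mem_tnth.
Qed.

Theorem proposition3p7 (R : realType) (X : choiceType) (d : X -> X -> \bar R)
  (hd : ext_metric d) (hulf : unif_loc_finite d) (hna : ~ amenable d) :
  forall (n : nat) (r : R), 0 < r ->
    exists S : R, 0 < S /\
      forall M : {fset X},
        exists x : 'I_(n * #|` M|) -> X,
          (forall i j, i != j -> cball d (x i) r `&` cball d (x j) r = set0) /\
          (forall i, cball d (x i) r `<=` cball_set d [set` M] S).
Proof.
move=> n r hr.
have [N hN] := hulf (r + r) (addr_gt0 hr hr).
have hN1 : cball_card_le d (r + r) N.+1 := cball_card_leW d (leqnSn N) hN.
have [S [S0 growth]] := neighbourhood_growth d hd hulf hna (n * N.+1).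
exists (S + r + 1); split; first by lra.
move=> M.
have [Y [uY sYA disjY cardY]] := disjoint_cball_packing d hd (nbhd_fset d S M) hr hN1.
have sizeY : (n * #|`M| <= size Y)%N.
  by rewrite -(@leq_pmul2r N.+1) // mulnAC (leq_trans (growth M)).
have [x [injx xY]] := uniq_prefix_enum uY sizeY.
exists x; split => [i j ij|i]; first by apply: disjY; rewrite ?xY ?(inj_eq injx).
apply: (cball_set_trans d hd) => _ ->.
by have := sYA _ (xY i); rewrite in_nbhd_fset // in_setE.
Qed.
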